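(* Let $a,x,u,v$ be integers with $3\le a\le x$, $0\le u\le a-3$, and $u+2\le v\le\min\left(a-1,\frac{a(x-1)}{x}\right)$. Let $\lambda$ consist of $ua+v$ parts equal to $x$ and $v-(u+1)$ parts equal to $ax$, and let $n=|\lambda|$, so that $n=x[(a+1)(v-1)+1]$ and $n-1=xa(v-1)+xv-1$. For $0\le i\le n-2$ write uniquely $i=\frac{n}{x}r_i+(v-1)p_i+q_i$ with integers $0\le r_i<x$, $0\le p_i<a+2$, $0\le q_i<v-1$, $0\le (v-1)p_i+q_i<n/x$. Let $f(i)=ar_i-(xv-1)p_i+xaq_i$ and, for $k\in\mathbb{Z}$, $F_k=\{i\in\{1,\dots,n-2\}:k=-\lfloor f(i)/(n-1)\rfloor\}$. Then $\{1,\dots,n-2\}=F_0\uplus F_1\uplus F_2$, i.e. $F_k=\emptyset$ for $k\notin\{0,1,2\}$. *)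

From mathcomp Require Import all_boot all_order all_algebra.
Set Implicit Arguments. Unset Strict Implicit. Unset Printing Implicit Defensive.
Import Order.TTheory GRing.Theory Num.Theory.

Definition lam (a x u v : nat) : seq nat :=
  nseq (u * a + v) x ++ nseq (v - (u + 1)) (a * x).

Definition nn (a x u v : nat) : nat := sumn (lam a x u v).

Definition r_i (a x u v i : nat) : nat := i %/ (nn a x u v %/ x).
Definition p_i (a x u v i : nat) : nat := (i %% (nn a x u v %/ x)) %/ (v - 1).
Definition q_i (a x u v i : nat) : nat := (i %% (nn a x u v %/ x)) %% (v - 1).

Local Open Scope ring_scope.
Definition f_i (a x u v i : nat) : int :=
  (a * r_i a x u v i)%:Z - (x * v - 1)%:Z * (p_i a x u v i)%:Z
  + (x * a * q_i a x u v i)%:Z.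

(* i \in F_k  iff  1 <= i <= n-2  and  k = - floor(f(i)/(n-1)).
   For a positive divisor, intdiv's %/ is floor division. *)
Definition inF (a x u v : nat) (k : int) (i : nat) : bool :=
  (1 <= i <= nn a x u v - 2)%N &&
  (k == - ((f_i a x u v i) %/ (nn a x u v - 1)%:Z)%Z).

From mathcomp Require Import all_boot all_order all_algebra.
From mathcomp Require Import zify.
Import Order.TTheory GRing.Theory Num.Theory.

(** Write n = x N with N = (a+1)(v-1)+1.  The digits of i satisfy r <= x-1,
    p <= a+1 and q <= v-2, hence -(xv-1)(a+1) <= f(i) <= a(x-1) + xa(v-2).
    The lower bound is at least -2(n-1) and the upper bound is below n-1, so
    floor(f(i)/(n-1)) lies in {-2, -1, 0}. *)

Lemma nn_lam a x u v : (u < v)%N -> nn a x u v = (x * ((a + 1) * (v - 1) + 1))%N.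
Proof.
move=> u_lt_v; rewrite /nn /lam sumn_cat !sumn_nseq.
have [w ->] : exists w, v = (u + 1 + w)%N by exists (v - (u + 1))%N; lia.
have -> : (u + 1 + w - (u + 1) = w)%N by lia.
have -> : (u + 1 + w - 1 = u + w)%N by lia.
nia.
Qed.

Lemma floorz_range (f m : int) :
  (0 < m)%R -> (- (2 * m) <= f < m)%R -> (0 <= - (f %/ m)%Z <= 2)%R.
Proof.
move=> m_gt0 /andP[f_ge f_lt].
have : (-2 <= (f %/ m)%Z)%R by rewrite lez_divRL // mulNr.
have : ((f %/ m)%Z < 1)%R by rewrite ltz_divLR // mul1r.
lia.
Qed.

Lemma f_lower_bound_ineq a x v : (1 < v)%N ->
  ((x * v - 1) * (a + 1) <= 2 * (x * ((a + 1) * (v - 1) + 1) - 1))%N.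
Proof.
move=> v_gt1.
have [w ->] : exists w, v = (w + 2)%N by exists (v - 2)%N; lia.
case: x => [|y]; first by rewrite mul0n.
nia.
Qed.

Lemma f_upper_bound_ineq a x v : (0 < x)%N -> (1 < v)%N ->
  (a * (x - 1) + x * a * (v - 2) < x * ((a + 1) * (v - 1) + 1) - 1)%N.
Proof.
move=> x_gt0 v_gt1.
have [w ->] : exists w, v = (w + 2)%N by exists (v - 2)%N; lia.
case: x x_gt0 => [//|y _].
nia.
Qed.

Section Digits.

Variables a x u v i : nat.
Hypotheses (u_lt_v : (u < v)%N) (v_gt1 : (1 < v)%N).
Hypotheses (i_gt0 : (0 < i)%N) (i_le : (i <= nn a x u v - 2)%N).

Let N := ((a + 1) * (v - 1) + 1)%N.

Let nnE : nn a x u v = (x * N)%N.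
Proof. exact: nn_lam. Qed.

Let x_gt0 : (0 < x)%N.
Proof. by move: i_le; rewrite nnE; case: x => [|//]; lia. Qed.

Let nn_divx : (nn a x u v %/ x = N)%N.
Proof. by rewrite nnE mulKn. Qed.

Lemma r_i_lt : (r_i a x u v i < x)%N.
Proof. by rewrite /r_i nn_divx ltn_divLR ?addn1 //; lia. Qed.

Lemma p_i_le : (p_i a x u v i <= a + 1)%N.
Proof.
rewrite /p_i nn_divx -ltnS ltn_divLR ?subn_gt0 //.
have : (N <= (a + 1).+1 * (v - 1))%N by rewrite mulSn /N; lia.
have : (i %% N < N)%N by rewrite ltn_mod /N addn1.
lia.
Qed.

Lemma q_i_le : (q_i a x u v i <= v - 2)%N.
Proof.
have : (q_i a x u v i < v - 1)%N by rewrite ltn_pmod ?subn_gt0.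
lia.
Qed.

Lemma f_i_ge : (- ((x * v - 1) * (a + 1))%N%:Z <= f_i a x u v i)%R.
Proof.
have := leq_mul (leqnn (x * v - 1)) p_i_le.
rewrite /f_i -!PoszM.
move: (a * r_i _ _ _ _ _)%N ((x * v - 1) * p_i _ _ _ _ _)%N (x * a * q_i _ _ _ _ _)%N.
lia.
Qed.

Lemma f_i_le : (f_i a x u v i <= (a * (x - 1) + x * a * (v - 2))%N%:Z)%R.
Proof.
have r_le : (r_i a x u v i <= x - 1)%N by have := r_i_lt; lia.
have := leq_mul (leqnn a) r_le.
have := leq_mul (leqnn (x * a)) q_i_le.
rewrite /f_i -!PoszM.
move: (a * r_i _ _ _ _ _)%N ((x * v - 1) * p_i _ _ _ _ _)%N (x * a * q_i _ _ _ _ _)%N.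
lia.
Qed.

Lemma f_i_div_range :
  (0 <= - (f_i a x u v i %/ (nn a x u v - 1)%:Z)%Z <= 2)%R.
Proof.
apply: floorz_range; first by rewrite ltz_nat; lia.
have := f_lower_bound_ineq a x v v_gt1.
have := f_upper_bound_ineq a x v x_gt0 v_gt1.
have := f_i_ge; have := f_i_le; rewrite -/N -nnE.
lia.
Qed.

End Digits.

Theorem proposition4p8 (a x u v : nat) :
  (3 <= a)%N -> (a <= x)%N -> (u <= a - 3)%N ->
  (u + 2 <= v)%N -> (v <= a - 1)%N -> (v * x <= a * (x - 1))%N ->
  (forall i : nat, (1 <= i <= nn a x u v - 2)%N ->
     [|| inF a x u v 0 i, inF a x u v 1 i | inF a x u v 2 i]) /\
  (forall k : int, k \notin [:: 0%Z; 1%Z; 2%Z] ->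
     forall i : nat, ~~ inF a x u v k i).
Proof.
move=> _ _ _ uv2 _ _.
have u_lt_v : (u < v)%N by lia.
have v_gt1 : (1 < v)%N by lia.
have range i : (1 <= i <= nn a x u v - 2)%N ->
    (0 <= - (f_i a x u v i %/ (nn a x u v - 1)%:Z)%Z <= 2)%R.
  by case/andP => i_gt0 i_le; exact: f_i_div_range.
split=> [i i_range | k k_out i].
  rewrite /inF i_range /=; have := range i i_range.
  set d := (- _)%R; lia.
apply/negP => /andP[i_range /eqP k_def].
move: k_out; rewrite k_def !inE; have := range i i_range.
set d := (- _)%R; lia.
Qed.
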